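(* Let $q>0$, $R>0$. For $(\eta,\sigma)\in\mathbb{R}^2$ let $(\varphi,\tilde\varphi)$ solve on $[0,R]$ $$d\varphi=\tilde\varphi\,dx,\qquad d\tilde\varphi=(\eta^2-q)\varphi\,dx-\sigma\varphi\,dW_x,\qquad\varphi(0)=1,\ \tilde\varphi(0)=\eta,$$ and set $F(\eta,\sigma):=\tilde\varphi(R)+\eta\varphi(R)$. If $\eta_0\in(0,\sqrt q)$ satisfies $F(\eta_0,0)=0$, then $\partial_\eta F(\eta_0,0)\neq0$; explicitly, with $c_0=\sqrt{q-\eta_0^2}$, $$\partial_\eta F(\eta_0,0)=\cos(c_0R)\Big[2+\eta_0R-\frac{\eta_0^3R}{c_0^2}\Big]+\sin(c_0R)\Big[\frac{3\eta_0+2\eta_0^2R}{c_0}+\frac{\eta_0^3}{c_0^3}\Big]\neq0 .$$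
   Context: $W$ is a standard real Brownian motion. At $\sigma=0$, $\varphi(x)=\cos(cx)+\frac{\eta}{c}\sin(cx)$ with $c=\sqrt{q-\eta^2}$; zeros $\eta_0\in(0,\sqrt q)$ of $F(\cdot,0)$ are the soliton parameters of the KdV equation $\partial_tU+6U\partial_xU+\partial_x^3U=0$ with initial datum $q\mathbf{1}_{[0,R]}$ (eigenvalues $\zeta=i\eta_0$ of $\varphi''+(U_0+\zeta^2)\varphi=0$). *)

From Stdlib Require Import Reals Lra.
Open Scope R_scope.

(* The deterministic (sigma = 0) linear system
     phi' = dphi,  dphi' = (eta^2 - q) phi,  phi(0) = 1, dphi(0) = eta
   for a family of solutions indexed by eta.  phi eta x, dphi eta x. *)
Definition is_sigma0_solution (q : R) (phi dphi : R -> R -> R) : Prop :=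
  forall eta : R,
    phi eta 0 = 1 /\ dphi eta 0 = eta /\
    (forall x : R, derivable_pt_lim (phi eta) x (dphi eta x)) /\
    (forall x : R, derivable_pt_lim (dphi eta) x ((eta ^ 2 - q) * phi eta x)).

Definition F0 (R0 : R) (phi dphi : R -> R -> R) (eta : R) : R :=
  dphi eta R0 + eta * phi eta R0.

Definition dF_explicit (q R0 eta0 : R) : R :=
  let c0 := sqrt (q - eta0 ^ 2) in
  cos (c0 * R0) * (2 + eta0 * R0 - eta0 ^ 3 * R0 / c0 ^ 2)
  + sin (c0 * R0) * ((3 * eta0 + 2 * eta0 ^ 2 * R0) / c0 + eta0 ^ 3 / c0 ^ 3).

From Stdlib Require Import Reals Lra.
From Coquelicot Require Import Coquelicot.
Open Scope R_scope.

(* For eta^2 < q the sigma = 0 system is a harmonic oscillator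
   with frequency c = sqrt (q - eta^2), so the solution is forced to be
     phi = cos (c x) + eta/c sin (c x),   dphi = -c sin (c x) + eta cos (c x);
   uniqueness follows from conservation of the energy v^2 - k u^2 (k < 0) of
   the difference of two solutions.  Hence, on the neighbourhood
   |eta| < sqrt q of eta0, F(., 0) coincides with an explicit elementary
   function, whose derivative at eta0 is computed symbolically and equals
   dF_explicit.  For non-vanishing, F(eta0, 0) = 0 and dF_explicit = 0 give
   two linear equations in (cos (c R), sin (c R)) whose determinant
   c (c^2 + eta0^2)^2 (2 + eta0 R) is positive; both would then vanish,
   contradicting cos^2 + sin^2 = 1. *)

(* Uniqueness for u' = v, v' = k u with k < 0: the energy v^2 - k u^2 is
   constant, so zero initial data force the zero solution. *)
Lemma oscillator_zero_solution (k : R) (hk : k < 0) (u v : R -> R)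
  (hu : forall x, derivable_pt_lim u x (v x))
  (hv : forall x, derivable_pt_lim v x (k * u x))
  (hu0 : u 0 = 0) (hv0 : v 0 = 0) (x : R) :
  u x = 0 /\ v x = 0.
Proof.
  set (E := fun t => v t * v t - k * (u t * u t)).
  assert (HE : forall t, derivable_pt_lim E t 0).
  { intro t.
    replace 0 with ((k * u t * v t + v t * (k * u t)) - k * (v t * u t + u t * v t))
      by ring.
    apply (derivable_pt_lim_minus (fun t => v t * v t) (fun t => k * (u t * u t))).
    - apply (derivable_pt_lim_mult v v); auto.
    - apply (derivable_pt_lim_scal (fun t => u t * u t)).
      apply (derivable_pt_lim_mult u u); auto. }
  assert (Hconst : constant E).
  { apply (null_derivative_1 E (fun t => exist _ 0 (HE t))). intro; reflexivity. }
  assert (Ex : E x = 0).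
  { rewrite (Hconst x 0). unfold E. rewrite hu0, hv0. ring. }
  unfold E in Ex.
  assert (hux : u x * u x = 0) by nra.
  assert (hvx : v x * v x = 0) by nra.
  split; [destruct (Rmult_integral _ _ hux) | destruct (Rmult_integral _ _ hvx)]; auto.
Qed.

Definition freq (q eta : R) : R := sqrt (q - eta ^ 2).

Definition phi_closed (q eta x : R) : R :=
  cos (freq q eta * x) + eta / freq q eta * sin (freq q eta * x).

Definition dphi_closed (q eta x : R) : R :=
  - freq q eta * sin (freq q eta * x) + eta * cos (freq q eta * x).

Lemma freq_pos (q eta : R) (he : eta ^ 2 < q) : 0 < freq q eta.
Proof. apply sqrt_lt_R0; lra. Qed.

Lemma freq_sqr (q eta : R) (he : eta ^ 2 < q) : freq q eta * freq q eta = q - eta ^ 2.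
Proof. apply sqrt_sqrt; lra. Qed.

Lemma closed_solves (q eta : R) (he : eta ^ 2 < q) (x : R) :
  derivable_pt_lim (phi_closed q eta) x (dphi_closed q eta x) /\
  derivable_pt_lim (dphi_closed q eta) x ((eta ^ 2 - q) * phi_closed q eta x).
Proof.
  pose proof (freq_pos q eta he) as hc.
  pose proof (freq_sqr q eta he) as hc2.
  unfold phi_closed, dphi_closed.
  split; apply is_derive_Reals; auto_derive; auto.
  - field. lra.
  - replace (eta ^ 2 - q) with (- (freq q eta * freq q eta)) by lra. field. lra.
Qed.

Lemma solution_closed_form (q : R) (phi dphi : R -> R -> R)
  (hsol : is_sigma0_solution q phi dphi) (eta : R) (he : eta ^ 2 < q) (x : R) :
  phi eta x = phi_closed q eta x /\ dphi eta x = dphi_closed q eta x.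
Proof.
  destruct (hsol eta) as [h0 [h0' [hd hd']]].
  destruct (oscillator_zero_solution (eta ^ 2 - q) ltac:(lra)
              (fun t => phi eta t - phi_closed q eta t)
              (fun t => dphi eta t - dphi_closed q eta t)) with (x := x)
    as [hu hv].
  - intro t. apply derivable_pt_lim_minus; [apply hd | apply closed_solves; lra].
  - intro t. rewrite Rmult_minus_distr_l.
    apply derivable_pt_lim_minus; [apply hd' | apply closed_solves; lra].
  - unfold phi_closed. rewrite h0, Rmult_0_r, cos_0, sin_0. ring.
  - unfold dphi_closed. rewrite h0', Rmult_0_r, cos_0, sin_0. ring.
  - split; lra.
Qed.

Definition F0_closed (q R0 eta : R) : R :=
  dphi_closed q eta R0 + eta * phi_closed q eta R0.

Lemma F0_closed_derivative (q R0 eta : R) (he : eta ^ 2 < q) :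
  derivable_pt_lim (F0_closed q R0) eta (dF_explicit q R0 eta).
Proof.
  pose proof (freq_pos q eta he) as hc.
  apply is_derive_Reals.
  unfold F0_closed, phi_closed, dphi_closed, dF_explicit, freq in *.
  set (c := sqrt (q - eta ^ 2)) in *.
  auto_derive; replace (q + - (eta * (eta * 1))) with (q - eta ^ 2) by ring; fold c.
  - repeat split; lra.
  - field. lra.
Qed.

(* Hence F(., 0) itself has this derivative: it agrees with the closed form
   on the open interval |eta| < sqrt q. *)
Lemma F0_derivative (q R0 : R) (hq : 0 < q) (phi dphi : R -> R -> R)
  (hsol : is_sigma0_solution q phi dphi) (eta : R) (h0 : 0 <= eta) (h1 : eta < sqrt q) :
  derivable_pt_lim (F0 R0 phi dphi) eta (dF_explicit q R0 eta).
Proof.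
  assert (hsq2 : sqrt q * sqrt q = q) by (apply sqrt_sqrt; lra).
  assert (hsq : 0 < sqrt q) by lra.
  apply is_derive_Reals.
  apply is_derive_ext_loc with (F0_closed q R0).
  - assert (hd : 0 < sqrt q - eta) by lra.
    exists (mkposreal _ hd). intros y hy.
    unfold ball in hy; simpl in hy; unfold AbsRing_ball, abs, minus, plus, opp in hy;
      simpl in hy.
    apply Rabs_def2 in hy.
    assert (hy2 : y ^ 2 < q).
    { assert (0 < (sqrt q - y) * (sqrt q + y)) by (apply Rmult_lt_0_compat; lra). nra. }
    destruct (solution_closed_form q phi dphi hsol y hy2 R0) as [A B].
    unfold F0, F0_closed. rewrite A, B. reflexivity.
  - apply is_derive_Reals, F0_closed_derivative. nra.
Qed.

(* The linear system in (co, s) = (cos (cR), sin (cR)) given by F = 0 and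
   dF = 0 (both multiplied by a power of c) has positive determinant
   c (c^2 + e^2)^2 (2 + e R), so it only has the trivial solution. *)
Lemma root_system_trivial (c e R0 co s : R) (hc : 0 < c) (he : 0 < e) (hR : 0 < R0)
  (L1 : 2 * e * c * co - (c * c - e * e) * s = 0)
  (L2 : ((2 + e * R0) * c ^ 3 - e ^ 3 * R0 * c) * co
        + ((3 * e + 2 * e ^ 2 * R0) * c ^ 2 + e ^ 3) * s = 0) :
  co = 0 /\ s = 0.
Proof.
  set (a := (2 + e * R0) * c ^ 3 - e ^ 3 * R0 * c) in L2.
  set (b := (3 * e + 2 * e ^ 2 * R0) * c ^ 2 + e ^ 3) in L2.
  set (det := c * (c ^ 2 + e ^ 2) ^ 2 * (2 + e * R0)).
  assert (hdet : 0 < det).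
  { unfold det. repeat apply Rmult_lt_0_compat; try apply pow_lt; nra. }
  assert (Hco : co * det = b * (2 * e * c * co - (c * c - e * e) * s)
                           + (c * c - e * e) * (a * co + b * s))
    by (unfold det, a, b; ring).
  assert (Hs : s * det = 2 * e * c * (a * co + b * s)
                         - a * (2 * e * c * co - (c * c - e * e) * s))
    by (unfold det, a, b; ring).
  rewrite L1, L2 in Hco, Hs.
  split; [destruct (Rmult_integral co det) | destruct (Rmult_integral s det)]; lra.
Qed.

Lemma dF_explicit_nonzero (q R0 eta0 : R) (hR : 0 < R0) (h0 : 0 < eta0)
  (he : eta0 ^ 2 < q) (hF : F0_closed q R0 eta0 = 0) :
  dF_explicit q R0 eta0 <> 0.
Proof.
  pose proof (freq_pos q eta0 he) as hc.
  unfold F0_closed, phi_closed, dphi_closed in hF.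
  unfold dF_explicit. fold (freq q eta0).
  set (c := freq q eta0) in *.
  set (co := cos (c * R0)) in *. set (s := sin (c * R0)) in *.
  intro HdF.
  destruct (root_system_trivial c eta0 R0 co s hc h0 hR) as [Hco Hs].
  - replace (2 * eta0 * c * co - (c * c - eta0 * eta0) * s)
      with (c * (- c * s + eta0 * co + eta0 * (co + eta0 / c * s))) by (field; lra).
    rewrite hF; ring.
  - replace (((2 + eta0 * R0) * c ^ 3 - eta0 ^ 3 * R0 * c) * co
             + ((3 * eta0 + 2 * eta0 ^ 2 * R0) * c ^ 2 + eta0 ^ 3) * s)
      with (c ^ 3 * (co * (2 + eta0 * R0 - eta0 ^ 3 * R0 / c ^ 2)
             + s * ((3 * eta0 + 2 * eta0 ^ 2 * R0) / c + eta0 ^ 3 / c ^ 3)))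
      by (field; lra).
    rewrite HdF; ring.
  - pose proof (sin2_cos2 (c * R0)) as Hpyth. fold co s in Hpyth.
    unfold Rsqr in Hpyth. rewrite Hco, Hs in Hpyth. lra.
Qed.

Theorem mainTheorem11 (q R0 : R) (hq : 0 < q) (hR : 0 < R0)
  (phi dphi : R -> R -> R) (hsol : is_sigma0_solution q phi dphi)
  (eta0 : R) (h0 : 0 < eta0) (h1 : eta0 < sqrt q)
  (hF : F0 R0 phi dphi eta0 = 0) :
  derivable_pt_lim (F0 R0 phi dphi) eta0 (dF_explicit q R0 eta0) /\
  dF_explicit q R0 eta0 <> 0.
Proof.
  assert (he0 : eta0 ^ 2 < q).
  { assert (sqrt q * sqrt q = q) by (apply sqrt_sqrt; lra). nra. }
  split.
  - apply F0_derivative; auto; lra.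
  - apply dF_explicit_nonzero; auto.
    destruct (solution_closed_form q phi dphi hsol eta0 he0 R0) as [A B].
    unfold F0 in hF. rewrite A, B in hF. exact hF.
Qed.
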